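(* Let $r,n\ge2$, $\pi=A_1\cdots A_n\in\mathbb{S}_{2rn}$ with $A_j=(2r(j-1)+1\ \cdots\ 2rj)$, and $\mathcal{C}$ its conjugacy class. Let $t\in\mathcal{C}$ with $t\pi=\pi t$ and let $g\in\mathbb{S}_{2rn}$ with $g\pi g^{-1}=t$. Write $t=A_1^{d_1}\cdots A_n^{d_n}B$ and $g^{-1}\pi g=A_1^{e_1}\cdots A_n^{e_n}B'$ with $B,B'\in\langle B_1,\dots,B_{n-1}\rangle$. Then $\Phi(B)$ and $\Phi(B')$ have the same cycle type in $\mathbb{S}_n$.
   Context: Permutations are composed right to left. $B_i$ ($1\le i\le n-1$) is the involution exchanging $2r(i-1)+m\leftrightarrow 2ri+m$ for $1\le m\le 2r$. The centralizer of $\pi$ is $\mathbb{S}_{2rn}^\pi=\langle A_1,\dots,A_n\rangle\rtimes\langle B_1,\dots,B_{n-1}\rangle\cong\mathbb{Z}_{2r}^n\rtimes\mathbb{S}_n$, so every element of it is uniquely written $A_1^{d_1}\cdots A_n^{d_n}B$ with $0\le d_j\le 2r-1$ and $B\in\langle B_1,\dots,B_{n-1}\rangle$ (both $t$ and $g^{-1}\pi g$ lie in it). $\Phi:\langle B_1,\dots,B_{n-1}\rangle\to\mathbb{S}_n$ is the group isomorphism with $\Phi(B_i)=(i\ i+1)$. *)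

From HB Require Import structures.
From mathcomp Require Import all_boot all_order all_algebra all_fingroup.
Set Implicit Arguments. Unset Strict Implicit. Unset Printing Implicit Defensive.

(* Points of {1,...,2rn}: the point 2r*k + m + 1 (paper, 1-indexed) is
   represented by the pair (k, m) with k < n (block), m < 2r (offset).
   Permutations are MathComp perms; NB (s * t) x = t (s x) in MathComp. *)
Definition pt (r n : nat) := ('I_n * 'I_(2 * r))%type.

(* A_(j+1): the 2r-cycle on block j : (k,m) |-> (k, m+1 mod 2r) if k = j. *)
Definition Afun r n (j : 'I_n) (x : pt r n) : pt r n :=
  if x.1 == j then (x.1, ordS x.2) else x.
Definition Afun_inv r n (j : 'I_n) (x : pt r n) : pt r n :=
  if x.1 == j then (x.1, ord_pred x.2) else x.
Lemma AfunK r n j : cancel (@Afun r n j) (@Afun_inv r n j).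
Proof.
move=> [k m]; rewrite /Afun /Afun_inv /=.
case: (eqVneq k j) => [->|nkj]; first by rewrite eqxx /= ?eqxx ordSK.
by rewrite (negbTE nkj) /= ?(negbTE nkj).
Qed.
Definition Acyc r n (j : 'I_n) : {perm pt r n} := perm (can_inj (@AfunK r n j)).

Definition piperm r n : {perm pt r n} := (\prod_(j < n) Acyc r j)%g.

Definition Aprod r n (d : 'I_n -> nat) : {perm pt r n} :=
  (\prod_(j < n) (Acyc r j ^+ d j))%g.

Definition bfun r n (s : 'S_n) (x : pt r n) : pt r n := (s x.1, x.2).
Lemma bfunK r n s : cancel (@bfun r n s) (@bfun r n s^-1).
Proof. by move=> [k m]; rewrite /bfun /= permK. Qed.
Definition blockperm r n (s : 'S_n) : {perm pt r n} := perm (can_inj (@bfunK r n s)).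

(* B_i (1 <= i <= n-1): exchanges 2r(i-1)+m <-> 2ri+m, i.e. blocks i-1 and i
   (0-indexed) pointwise. *)
Definition Bgen r n (i : 'I_n) : {perm pt r n} := blockperm r (tperm (Ordinal (leq_ltn_trans (leq_pred i) (ltn_ord i))) i).

Definition Bgroup r n : {set {perm pt r n}} :=
  <<[set Bgen r i | i : 'I_n & 0 < i]>>%g.

(* Phi : <B_1..B_(n-1)> -> S_n, the isomorphism with Phi(B_i) = (i i+1);
   it is the inverse of blockperm. *)
Definition Phi r n (B : {perm pt r n}) : 'S_n :=
  odflt 1%g [pick s : 'S_n | blockperm r s == B].

(* cycle type: sorted list of the cycle lengths (fixed points included) *)
Definition cycle_type (T : finType) (s : {perm T}) : seq nat :=
  sort leq [seq #|(C : {set T})| | C <- enum (porbits s)].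

From mathcomp Require Import all_boot all_order all_algebra all_fingroup.
Set Implicit Arguments. Unset Strict Implicit. Unset Printing Implicit Defensive.

(* Every B in <B_1, ..., B_(n-1)> moves whole blocks, by the permutation Phi B,
   while pi rotates inside each block.  Hence the orbits of <pi, t> on the
   points are exactly the unions of the blocks lying in one cycle of Phi B,
   and likewise for <pi, g pi g^-1> and Phi B'.  Since t = g^-1 pi g, conjugation
   by g carries the second group onto the first, so g maps orbits to orbits of
   the same size: a point of a block in a cycle of length l of Phi B' goes to a
   point of a block in a cycle of length l of Phi B.  Counting points, both
   permutations have the same number of cycles of each length. *)

Lemma card_orbit_conjsg (T : finType) (G : {set {perm T}}) (g : {perm T}) x :
  #|orbit 'P (G :^ g)%g (g x)| = #|orbit 'P G x|.
Proof. by rewrite -[g x]/(aperm x g) -setact_orbit card_setact. Qed.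

Lemma card_fst_preimset (T1 T2 : finType) (P : {set T1}) :
  #|[set y : T1 * T2 | y.1 \in P]| = #|P| * #|T2|.
Proof.
have -> : [set y : T1 * T2 | y.1 \in P] = setX P [set: T2].
  by apply/setP => y; rewrite !inE andbT.
by rewrite cardsX cardsT.
Qed.

Section CycleType.

Variable T : finType.
Implicit Type s : {perm T}.

Lemma porbit_size_count s l :
  l * count_mem l [seq #|(C : {set T})| | C <- enum (porbits s)] =
  #|[set x | #|porbit s x| == l]|.
Proof.
rewrite count_map -sum1_count big_enum_cond /= big_distrr /= -sum1_card.
rewrite (partition_big (porbit s) (fun C => (C \in porbits s) && (#|C| == l))).
  apply: eq_bigr => _ /andP[/imsetP[x _ ->] /eqP size_l].
  rewrite muln1 -{1}size_l -sum1_card; apply: eq_bigl => y.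
  rewrite inE eq_porbit_mem andbC.
  case y_x: (y \in porbit s x) => //=.
  by move: y_x; rewrite -eq_porbit_mem => /eqP ->; rewrite size_l eqxx.
by move=> x; rewrite inE => ->; rewrite andbT; apply: imset_f.
Qed.

Lemma porbit_size_neq0 s : 0 \notin [seq #|(C : {set T})| | C <- enum (porbits s)].
Proof.
apply/mapP => -[_ /[!mem_enum] /imsetP[x _ ->] size0].
by have := card_porbit_neq0 s x; rewrite -size0.
Qed.

Lemma eq_cycle_type s s' :
  (forall l, #|[set x | #|porbit s x| == l]| = #|[set x | #|porbit s' x| == l]|) ->
  cycle_type s = cycle_type s'.
Proof.
move=> eq_size; rewrite /cycle_type; apply/perm_sortP; [exact: leq_total|exact: leq_trans|exact: anti_leq|].
apply/allP => -[|l] _ /=; first by rewrite !(count_memPn (porbit_size_neq0 _)).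
by rewrite -(eqn_pmul2l (ltn0Sn l)) !porbit_size_count eq_size.
Qed.

End CycleType.

Lemma eq_cycle_type_fst (T1 T2 : finType) (s s' : {perm T1}) (g : {perm T1 * T2}) :
  0 < #|T2| -> (forall y, #|porbit s (g y).1| = #|porbit s' y.1|) ->
  cycle_type s = cycle_type s'.
Proof.
move=> T2_gt0 size_g; apply: eq_cycle_type => l; apply/eqP.
rewrite -(eqn_pmul2r T2_gt0) -!card_fst_preimset.
have -> : [set y : T1 * T2 | y.1 \in [set k | #|porbit s' k| == l]] =
          g @^-1: [set y | y.1 \in [set k | #|porbit s k| == l]].
  by apply/setP => y; rewrite !inE size_g.
by rewrite card_preimset //; apply: perm_inj.
Qed.

Section Blocks.

Variables r n : nat.
Local Notation pt := (pt r n).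
Local Notation pi := (piperm r n).

Lemma blockpermE (s : 'S_n) (x : pt) : blockperm r s x = (s x.1, x.2).
Proof. by rewrite permE. Qed.

Lemma blockpermM (s1 s2 : 'S_n) :
  blockperm r (s1 * s2)%g = (blockperm r s1 * blockperm r s2)%g.
Proof. by apply/permP => x; rewrite permM !blockpermE permM. Qed.

Lemma blockperm1 : blockperm r (1 : 'S_n)%g = 1%g.
Proof. by apply/permP => -[k m]; rewrite blockpermE !perm1. Qed.

Lemma Bgroup_blockperm (B : {perm pt}) : B \in Bgroup r n -> exists s, B = blockperm r s.
Proof.
case/gen_prodgP => k [c Bc ->].
apply: (big_ind (fun a => exists s, a = blockperm r s)).
- by exists 1%g; rewrite blockperm1.
- by move=> _ _ [s1 ->] [s2 ->]; exists (s1 * s2)%g; rewrite blockpermM.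
- by move=> i _; have /imsetP[j _ ->] := Bc i; eexists.
Qed.

Lemma PhiK (B : {perm pt}) : B \in Bgroup r n -> blockperm r (Phi B) = B.
Proof.
case/Bgroup_blockperm => s ->; rewrite /Phi.
by case: pickP => [s0 /eqP // | /(_ s)]; rewrite eqxx.
Qed.

Lemma Bgroup_fst (B : {perm pt}) x : B \in Bgroup r n -> (B x).1 = Phi B x.1.
Proof. by move/PhiK => {1}<-; rewrite blockpermE. Qed.

Lemma Aprod_fst (d : 'I_n -> nat) (x : pt) : (Aprod r d x).1 = x.1.
Proof.
apply: (big_ind (fun p : {perm pt} => forall x, (p x).1 = x.1)) => //.
- by move=> y; rewrite perm1.
- by move=> p q p_fst q_fst y; rewrite permM q_fst p_fst.
move=> j _ y; rewrite permX; elim: (d j) => //= k <-.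
by rewrite permE /Afun; case: ifP.
Qed.

Lemma prod_Acyc_E (l : seq 'I_n) (x : pt) :
  (\prod_(j <- l) Acyc r j)%g x = (x.1, iter (count_mem x.1 l) (@ordS (2 * r)) x.2).
Proof.
elim: l x => [|j l IH] [k m]; first by rewrite big_nil perm1.
rewrite big_cons permM IH permE /Afun /=.
by case: (eqVneq k j) => [->|_] /=; rewrite add0n // -iterSr iterS.
Qed.

Lemma piE (x : pt) : pi x = (x.1, ordS x.2).
Proof. by rewrite prod_Acyc_E count_uniq_mem ?index_enum_uniq ?mem_index_enum. Qed.

Lemma piX i (x : pt) : (pi ^+ i)%g x = (x.1, iter i (@ordS (2 * r)) x.2).
Proof.
rewrite permX; elim: i => [|i IH] /=; first by case: x.
by rewrite IH piE.
Qed.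

Lemma iter_ordS_surj (N : nat) (m0 m : 'I_N) : exists i, iter i (@ordS N) m0 = m.
Proof.
have iterE i : val (iter i (@ordS N) m0) = (m0 + i) %% N.
  elim: i => [|i IH] /=; first by rewrite addn0 modn_small.
  by rewrite IH -addn1 modnDml addn1 addnS.
exists (m + N - m0); apply/val_inj; rewrite iterE subnKC.
  by rewrite modnDr modn_small.
exact: ltnW (leq_trans (ltn_ord m0) (leq_addl _ _)).
Qed.

Lemma orbit_pi_block (s : 'S_n) (X : {perm pt}) (x : pt) :
  (forall y, (X y).1 = s y.1) ->
  orbit 'P <<[set pi; X]>>%g x = [set y | y.1 \in porbit s x.1].
Proof.
move=> X_fst; set G := <<_>>%g; apply/eqP; rewrite eqEsubset; apply/andP; split.
  rewrite acts_sub_orbit ?inE ?porbit_id // gen_subG subUset !sub1set.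
  apply/andP; split; apply/astabsP => y; rewrite !inE /= apermE ?piE //.
  by rewrite X_fst porbit_sym -{2}(expg1 s) porbit_perm porbit_sym.
have in_block z m : (z.1, m) \in orbit 'P G z.
  have [i <-] := iter_ordS_surj z.2 m; apply/orbitP; exists (pi ^+ i)%g.
    by rewrite groupX // mem_gen // !inE eqxx.
  by rewrite /= apermE piX.
have in_cycle i m : ((s ^+ i)%g x.1, m) \in orbit 'P G x.
  elim: i m => [|i IH] m; first by rewrite expg0 perm1 in_block.
  pose p := ((s ^+ i)%g x.1, x.2).
  have Xp : X p \in orbit 'P G x.
    apply: orbit_trans (IH x.2); apply: (mem_orbit 'P).
    by rewrite mem_gen // !inE eqxx orbT.
  apply: orbit_trans Xp.
  by rewrite expgSr permM -[(s ^+ i)%g x.1]/p.1 -X_fst; apply: in_block.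
by apply/subsetP => -[k m]; rewrite inE => /porbitP[i /= ->]; apply: in_cycle.
Qed.

End Blocks.

Theorem lemma2p17 (r n : nat) (hr : 2 <= r) (hn : 2 <= n)
  (t g B B' : {perm pt r n}) (d e : 'I_n -> nat)
  (hd : forall j, d j < 2 * r) (he : forall j, e j < 2 * r)
  (htC : t \in (piperm r n ^: [set: {perm pt r n}])%g)
  (htcomm : (t * piperm r n = piperm r n * t)%g)
  (hg : (piperm r n ^ g)%g = t)
  (hB : B \in Bgroup r n) (hB' : B' \in Bgroup r n)
  (htdec : t = (B * Aprod r d)%g)
  (hgdec : (piperm r n ^ g^-1)%g = (B' * Aprod r e)%g) :
  cycle_type (Phi B) = cycle_type (Phi B').
Proof.
set sigma := (piperm r n ^ g^-1)%g.
have t_fst x : (t x).1 = Phi B x.1 by rewrite htdec permM Aprod_fst Bgroup_fst.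
have sigma_fst x : (sigma x).1 = Phi B' x.1.
  by rewrite /sigma hgdec permM Aprod_fst Bgroup_fst.
have conj_gen : <<[set piperm r n; t]>>%g = (<<[set piperm r n; sigma]>> :^ g)%g.
  by rewrite -genJ conjUg !conjg_set1 hg /sigma -conjgM mulVg conjg1 setUC.
have block_gt0 : 0 < #|'I_(2 * r)| by rewrite card_ord muln_gt0 (leq_trans _ hr).
apply: (eq_cycle_type_fst block_gt0 (g := g)) => y; apply/eqP.
rewrite -(eqn_pmul2r block_gt0) -!card_fst_preimset.
by rewrite -(orbit_pi_block _ t_fst) -(orbit_pi_block _ sigma_fst) conj_gen
  card_orbit_conjsg.
Qed.
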